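(* For every $n\ge1$ and all polynomials $f_1,g_1,f_2,g_2$ of degree at most $n$, there exist real polynomials $\alpha,\beta,\gamma,\delta$ in $h$ with $\deg\alpha,\deg\gamma\le[\frac n2]$, $\deg\beta,\deg\delta\le[\frac{n-1}{2}]$, and a real polynomial $\varphi$ of degree at most $n-1$, such that for all $h\in(0,+\infty)$, $$M(h)=\alpha(h)U_{0,0}(h)+\beta(h)U_{0,1}(h)+\gamma(h)V_{0,0}(h)+\delta(h)V_{0,1}(h)+\Big(\tfrac{\sqrt{1+4h}-1}{2}\Big)^{3/2}\varphi\Big(\tfrac{\sqrt{1+4h}-1}{2}\Big).$$
   Context: Consider the system with the single switching curve $y=x^2$: $\dot x=y+\varepsilon f_1(x,y)$, $\dot y=-x+\varepsilon g_1(x,y)$ for $y<x^2$, and $\dot x=y+\varepsilon f_2(x,y)$, $\dot y=-x+\varepsilon g_2(x,y)$ for $y>x^2$, where $f_1,g_1,f_2,g_2$ are real polynomials of degree at most $n$. For $h>0$ let $u=\sqrt{(\sqrt{1+4h}-1)/2}$, $\Gamma_h$ the circle $x^2+y^2=h$, $A=(u,u^2)$, $D=(-u,u^2)$. Let $\widehat{AD}$ be the arc of $\Gamma_h$ traversed clockwise from $A$ to $D$ through $(\sqrt h,0),(0,-\sqrt h),(-\sqrt h,0)$, and $\widehat{DA}$ the arc traversed clockwise from $D$ to $A$ through $(0,\sqrt h)$. The first order Melnikov function is $M(h)=\int_{\widehat{AD}}g_1dx-f_1dy+\int_{\widehat{DA}}g_2dx-f_2dy$, and for integers $i,j\ge0$,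 $U_{i,j}(h)=\int_{\widehat{AD}}x^iy^jdx$, $V_{i,j}(h)=\int_{\widehat{DA}}x^iy^jdx$. $[p]$ is the integer part of $p$. *)

From Stdlib Require Import Reals ClassicalEpsilon.
Open Scope R_scope.

(* Oriented Riemann integral int_a^b F (for a <= b), total via choice;
   it agrees with RiemannInt whenever F is Riemann integrable on [a,b]. *)
Definition Rint (F : R -> R) (a b : R) : R :=
  epsilon (inhabits 0)
    (fun I => exists pr : Riemann_integrable F a b, RiemannInt pr = I).

Definition peval2 (n : nat) (c : nat -> nat -> R) (x y : R) : R :=
  sum_f_R0 (fun i => sum_f_R0 (fun j => c i j * x ^ i * y ^ j) n) n.

Definition deg2_le (n : nat) (c : nat -> nat -> R) : Prop :=
  forall i j, (n < i + j)%nat -> c i j = 0.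

Definition peval (d : nat) (a : nat -> R) (t : R) : R :=
  sum_f_R0 (fun k => a k * t ^ k) d.

Definition uu (h : R) : R := sqrt ((sqrt (1 + 4 * h) - 1) / 2).

(* Line integral of  g dx - f dy  along the circle of radius r = sqrt h,
   x = r cos t, y = r sin t, traversed clockwise, i.e. with the angle t
   decreasing from t0 to t1 (t1 < t0). *)
Definition arcint (g f : R -> R -> R) (h t0 t1 : R) : R :=
  let r := sqrt h in
  - Rint (fun t => g (r * cos t) (r * sin t) * (- r * sin t)
                   - f (r * cos t) (r * sin t) * (r * cos t)) t1 t0.

(* A = (u,u^2) has angle atan u; D = (-u,u^2) has angle PI - atan u.
   Arc AD (clockwise, through (sqrt h,0),(0,-sqrt h),(-sqrt h,0)):
   angle from atan u down to -PI - atan u.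
   Arc DA (clockwise, through (0,sqrt h)): angle from PI - atan u down to atan u. *)
Definition int_AD (g f : R -> R -> R) (h : R) : R :=
  arcint g f h (atan (uu h)) (- PI - atan (uu h)).
Definition int_DA (g f : R -> R -> R) (h : R) : R :=
  arcint g f h (PI - atan (uu h)) (atan (uu h)).

Definition melnikov (n : nat) (f1 g1 f2 g2 : nat -> nat -> R) (h : R) : R :=
  int_AD (peval2 n g1) (peval2 n f1) h + int_DA (peval2 n g2) (peval2 n f2) h.

Definition U (i j : nat) (h : R) : R :=
  int_AD (fun x y => x ^ i * y ^ j) (fun _ _ => 0) h.
Definition V (i j : nat) (h : R) : R :=
  int_DA (fun x y => x ^ i * y ^ j) (fun _ _ => 0) h.

From Stdlib Require Import Reals ClassicalEpsilon Arith Lra Lia Psatz FunctionalExtensionality.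
From Coquelicot Require Import Coquelicot.
Open Scope R_scope.

(* Parametrize the circle x^2 + y^2 = h by X = sqrt h cos t, Y = sqrt h sin t;
   an arc integral of  g dx - f dy  becomes the t-integral of the polynomial
   P = -(g y + f x) on the circle.  Along the circle dX/dt = -Y, dY/dt = X,
   and with Y^2 = h - X^2 every monomial x^i y^j of degree k >= 1 reduces to
   d/dt G_h(X,Y) + c h^(k/2), where c = 0 for odd k.  Summing up, an arc
   integral is the jump of a primitive G_h between the endpoints
   A = (u,u^2) and D = (-u,u^2) plus kappa(h) times the angular length of the
   arc.  The jump is odd in u, of the form u F(u^2) with deg F <= n, and
   kappa(h) = h K(h) with deg K <= [(n-1)/2].  Since U_{0,0} = -2u while
   U_{0,1}, V_{0,1} carry exactly the angular lengths of the two arcs, the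
   angular terms are multiples of U_{0,1}, V_{0,1}, and the odd part splits
   into a multiple of U_{0,0} plus w^(3/2) phi(w), where w = u^2. *)

Lemma peval_S d a t : peval (S d) a t = peval d a t + a (S d) * t ^ S d.
Proof. reflexivity. Qed.

Lemma peval_ext d a b t :
  (forall k, (k <= d)%nat -> a k = b k) -> peval d a t = peval d b t.
Proof.
  induction d; intro H.
  - unfold peval; simpl; rewrite (H 0%nat); auto.
  - rewrite !peval_S, IHd, (H (S d)); auto.
Qed.

Lemma peval_plus d a b t :
  peval d (fun k => a k + b k) t = peval d a t + peval d b t.
Proof. induction d; [unfold peval; simpl; ring|rewrite !peval_S, IHd; ring]. Qed.

Lemma peval_scal d c a t : peval d (fun k => c * a k) t = c * peval d a t.
Proof. induction d; [unfold peval; simpl; ring|rewrite !peval_S, IHd; ring]. Qed.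

Lemma peval_zero d t : peval d (fun _ => 0) t = 0.
Proof. induction d; [unfold peval; simpl; ring|rewrite peval_S, IHd; ring]. Qed.

Lemma peval_shift d a t :
  t * peval d a t = peval (S d) (fun k => match k with O => 0 | S k => a k end) t.
Proof.
  induction d.
  - unfold peval; simpl; ring.
  - rewrite peval_S, (peval_S (S d)), <- IHd; simpl; ring.
Qed.

Lemma peval_const d a t :
  (forall k, (1 <= k)%nat -> a k = 0) -> peval d a t = a O.
Proof.
  intro H; induction d; [unfold peval; simpl; ring|].
  rewrite peval_S, IHd, (H (S d)) by lia; ring.
Qed.

Lemma peval_split d q t :
  peval (S d) q t = q O + t * peval d (fun k => q (S k)) t.
Proof.
  rewrite (peval_ext _ q (fun k => (match k with O => q O | _ => 0 end) +
                                  (match k with O => 0 | S k => q (S k) end))).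
  - rewrite peval_plus, peval_const, peval_shift by (intros [|k] Hk; [lia|auto]).
    reflexivity.
  - intros [|k] _; ring.
Qed.

Definition poly_le (d : nat) (F : R -> R) : Prop :=
  exists a, forall w, F w = peval d a w.

Lemma poly_le_ext d F G : (forall w, F w = G w) -> poly_le d F -> poly_le d G.
Proof. intros H [a Ha]; exists a; intro w; rewrite <- H; auto. Qed.

Lemma poly_le_zero d : poly_le d (fun _ => 0).
Proof. exists (fun _ => 0); intro; now rewrite peval_zero. Qed.

Lemma poly_le_const c : poly_le 0 (fun _ => c).
Proof. exists (fun _ => c); intro; unfold peval; simpl; ring. Qed.

Lemma poly_le_plus d F G :
  poly_le d F -> poly_le d G -> poly_le d (fun w => F w + G w).
Proof.
  intros [a Ha] [b Hb]; exists (fun k => a k + b k); intro.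
  rewrite peval_plus, Ha, Hb; auto.
Qed.

Lemma poly_le_scal d c F : poly_le d F -> poly_le d (fun w => c * F w).
Proof. intros [a Ha]; exists (fun k => c * a k); intro; rewrite peval_scal, Ha; auto. Qed.

Lemma poly_le_mulX d F : poly_le d F -> poly_le (S d) (fun w => w * F w).
Proof. intros [a Ha]; eexists; intro; rewrite Ha, peval_shift; reflexivity. Qed.

Lemma poly_le_weaken d d' F : (d <= d')%nat -> poly_le d F -> poly_le d' F.
Proof.
  intros Hd [a Ha].
  exists (fun k => if Nat.leb k d then a k else 0); intro w.
  induction Hd as [|d' Hd IH].
  - rewrite Ha; apply peval_ext; intros k Hk.
    now replace (Nat.leb k d) with true by (symmetry; apply Nat.leb_le; lia).
  - rewrite peval_S, <- IH.
    replace (Nat.leb (S d') d) with false by (symmetry; apply Nat.leb_gt; lia); ring.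
Qed.

Lemma poly_le_monomial c p d : (p <= d)%nat -> poly_le d (fun w => c * w ^ p).
Proof.
  intro H; apply (poly_le_weaken p); auto; clear H.
  induction p.
  - apply poly_le_ext with (fun _ => c); [intro; simpl; ring|apply poly_le_const].
  - apply poly_le_ext with (fun w => w * (c * w ^ p)); [intro; simpl; ring|].
    apply poly_le_mulX; auto.
Qed.

Lemma poly_le_quad_power k : poly_le (2 * k) (fun w => (w + w ^ 2) ^ k).
Proof.
  induction k.
  - apply poly_le_ext with (fun _ => 1); [intro; simpl; ring|apply poly_le_const].
  - apply poly_le_ext with (fun w => w * (w + w ^ 2) ^ k + w * (w * (w + w ^ 2) ^ k));
      [intro; simpl; ring|].
    replace (2 * S k)%nat with (S (S (2 * k))) by lia.
    apply poly_le_plus.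
    + apply (poly_le_weaken (S (2 * k))); [lia|]; apply poly_le_mulX; auto.
    + apply poly_le_mulX, poly_le_mulX; auto.
Qed.

(* Composition with w + w^2 doubles the degree (h = w + w^2 below). *)
Lemma poly_le_comp_quad d F : poly_le d F -> poly_le (2 * d) (fun w => F (w + w ^ 2)).
Proof.
  intros [a Ha].
  apply poly_le_ext with (fun w => peval d a (w + w ^ 2)); [intro; rewrite Ha; auto|].
  clear Ha F; induction d.
  - apply poly_le_ext with (fun _ => a O); [intro; unfold peval; simpl; ring|].
    apply poly_le_const.
  - apply poly_le_ext
      with (fun w => peval d a (w + w ^ 2) + a (S d) * (w + w ^ 2) ^ S d); [auto|].
    apply poly_le_plus.
    + apply (poly_le_weaken (2 * d)); [lia|auto].
    + apply poly_le_scal, poly_le_quad_power.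
Qed.

Definition w_of (h : R) : R := (sqrt (1 + 4 * h) - 1) / 2.

Lemma w_of_pos h : 0 < h -> 0 < w_of h.
Proof.
  intro H; unfold w_of.
  assert (Hs : sqrt 1 < sqrt (1 + 4 * h)) by (apply sqrt_lt_1; lra).
  rewrite sqrt_1 in Hs; lra.
Qed.

Lemma uu_pos h : 0 < h -> 0 < uu h.
Proof. intro H; apply sqrt_lt_R0, w_of_pos, H. Qed.

Lemma uu_sq h : 0 < h -> uu h ^ 2 = w_of h.
Proof.
  intro H; unfold uu; simpl; rewrite Rmult_1_r, sqrt_sqrt; auto.
  left; apply w_of_pos, H.
Qed.

Lemma h_eq_uu h : 0 < h -> h = uu h ^ 2 + (uu h ^ 2) ^ 2.
Proof.
  intro H; rewrite uu_sq by exact H; unfold w_of.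
  assert (E := sqrt_sqrt (1 + 4 * h) ltac:(lra)).
  set (s := sqrt (1 + 4 * h)) in *; nra.
Qed.

Lemma sqrt_h_eq h : 0 < h -> sqrt h = uu h * sqrt (1 + (uu h)²).
Proof.
  intro H; rewrite (h_eq_uu h H) at 1.
  pose proof (uu_pos h H).
  replace (uu h ^ 2 + (uu h ^ 2) ^ 2) with ((uu h)² * (1 + (uu h)²))
    by (unfold Rsqr; ring).
  rewrite sqrt_mult_alt by apply Rle_0_sqr; rewrite sqrt_Rsqr; lra.
Qed.

Definition X (h t : R) : R := sqrt h * cos t.
Definition Y (h t : R) : R := sqrt h * sin t.

Lemma circle_XY h t : 0 <= h -> X h t ^ 2 + Y h t ^ 2 = h.
Proof.
  intro H; unfold X, Y.
  replace ((sqrt h * cos t) ^ 2 + (sqrt h * sin t) ^ 2)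
    with (sqrt h * sqrt h * ((sin t)² + (cos t)²)) by (unfold Rsqr; ring).
  rewrite sin2_cos2, sqrt_sqrt; auto; ring.
Qed.

Lemma X_A h : 0 < h -> X h (atan (uu h)) = uu h.
Proof.
  intro H; unfold X; rewrite cos_atan, sqrt_h_eq by exact H; field.
  apply Rgt_not_eq, sqrt_lt_R0; pose proof (Rle_0_sqr (uu h)); lra.
Qed.

Lemma Y_A h : 0 < h -> Y h (atan (uu h)) = uu h ^ 2.
Proof.
  intro H; unfold Y; rewrite sin_atan, sqrt_h_eq by exact H; field.
  apply Rgt_not_eq, sqrt_lt_R0; pose proof (Rle_0_sqr (uu h)); lra.
Qed.

Lemma X_PI_sub h t : X h (PI - t) = - X h t.
Proof. unfold X; rewrite Rtrigo_facts.cos_pi_minus; ring. Qed.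

Lemma Y_PI_sub h t : Y h (PI - t) = Y h t.
Proof. unfold Y; rewrite sin_PI_x; ring. Qed.

Lemma X_mPI_sub h t : X h (- PI - t) = - X h t.
Proof.
  unfold X; replace (- PI - t) with (- (t + PI)) by ring.
  rewrite cos_neg, neg_cos; ring.
Qed.

Lemma Y_mPI_sub h t : Y h (- PI - t) = Y h t.
Proof.
  unfold Y; replace (- PI - t) with (- (t + PI)) by ring.
  rewrite sin_neg, neg_sin; ring.
Qed.

Lemma derive_plus (f g : R -> R) (x df dg : R) :
  is_derive f x df -> is_derive g x dg -> is_derive (fun t => f t + g t) x (df + dg).
Proof. intros; now apply (is_derive_plus f g). Qed.

Lemma derive_minus (f g : R -> R) (x df dg : R) :
  is_derive f x df -> is_derive g x dg -> is_derive (fun t => f t - g t) x (df - dg).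
Proof. intros; now apply (is_derive_minus f g). Qed.

Lemma derive_congr (f : R -> R) (x d1 d2 : R) : is_derive f x d1 -> d1 = d2 -> is_derive f x d2.
Proof. now intros ? <-. Qed.

Definition mono (i j : nat) (x y : R) : R := x ^ i * y ^ j.

(* Since dX/dt = -Y and dY/dt = X. *)
Lemma derive_mono a b h t :
  is_derive (fun t => mono a b (X h t) (Y h t)) t
    (- INR a * X h t ^ pred a * Y h t ^ S b + INR b * X h t ^ S a * Y h t ^ pred b).
Proof. unfold mono, X, Y; auto_derive; auto; destruct a, b; simpl; ring. Qed.

Definition odd_u (d : nat) (E : R -> R) : Prop :=
  exists F, poly_le d F /\ forall h, 0 < h -> E h = uu h * F (uu h ^ 2).

Lemma odd_u_ext d E1 E2 :
  (forall h, 0 < h -> E1 h = E2 h) -> odd_u d E1 -> odd_u d E2.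
Proof. intros He [F [HF H1]]; exists F; split; auto; intros; rewrite <- He, H1; auto. Qed.

Lemma odd_u_zero d : odd_u d (fun _ => 0).
Proof. exists (fun _ => 0); split; [apply poly_le_zero|intros; ring]. Qed.

Lemma odd_u_plus d E1 E2 : odd_u d E1 -> odd_u d E2 -> odd_u d (fun h => E1 h + E2 h).
Proof.
  intros [F [HF H1]] [G [HG H2]]; exists (fun w => F w + G w); split.
  - apply poly_le_plus; auto.
  - intros h Hh; rewrite H1, H2; auto; ring.
Qed.

Lemma odd_u_scal d c E : odd_u d E -> odd_u d (fun h => c * E h).
Proof.
  intros [F [HF H1]]; exists (fun w => c * F w); split.
  - apply poly_le_scal; auto.
  - intros h Hh; rewrite H1; auto; ring.
Qed.

Lemma odd_u_weaken d d' E : (d <= d')%nat -> odd_u d E -> odd_u d' E.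
Proof. intros Hd [F [HF H1]]; exists F; split; auto; eapply poly_le_weaken; eauto. Qed.

(* Multiplying by h = w + w^2 raises the degree by two. *)
Lemma odd_u_mul_h d E : odd_u d E -> odd_u (S (S d)) (fun h => h * E h).
Proof.
  intros [F [HF H1]]; exists (fun w => w * F w + w * (w * F w)); split.
  - apply poly_le_plus; [apply (poly_le_weaken (S d)); [lia|]|];
      repeat apply poly_le_mulX; auto.
  - intros h Hh; rewrite H1 by exact Hh.
    assert (Eh := h_eq_uu h Hh); set (u := uu h) in *; rewrite Eh; ring.
Qed.

(* K(h) u^3 = u (w K(w + w^2)). *)
Lemma odd_u_poly_u3 m n K :
  poly_le m K -> (S (2 * m) <= n)%nat -> odd_u n (fun h => K h * uu h ^ 3).
Proof.
  intros HK Hm; exists (fun w => w * K (w + w ^ 2)); split.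
  - eapply poly_le_weaken; [exact Hm|]; apply poly_le_mulX, poly_le_comp_quad; auto.
  - intros h Hh; assert (Eh := h_eq_uu h Hh); set (u := uu h) in *.
    rewrite Eh at 1; ring.
Qed.

Definition jump (G : R -> R -> R -> R) (h : R) : R :=
  G h (uu h) (uu h ^ 2) - G h (- uu h) (uu h ^ 2).

(* A monomial jumps by 0 for even a and by 2 u^a u^(2b) for odd a. *)
Lemma odd_u_jump_mono a b :
  (1 <= a + b)%nat -> odd_u (a + b - 1) (jump (fun _ => mono a b)).
Proof.
  intro Hab; unfold jump, mono.
  destruct (Nat.Even_or_Odd a) as [[m Hm]|[m Hm]]; subst a.
  - apply odd_u_ext with (fun _ => 0); [|apply odd_u_zero].
    intros h _; rewrite !pow_mult; replace ((- uu h) ^ 2) with (uu h ^ 2) by ring; ring.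
  - exists (fun w => 2 * w ^ (m + b)); split; [apply poly_le_monomial; lia|].
    intros h _; rewrite !pow_add, !pow_mult.
    replace ((- uu h) ^ 2) with (uu h ^ 2) by ring; simpl; ring.
Qed.

Definition h_multiple (d : nat) (kappa : R -> R) : Prop :=
  exists K, poly_le d K /\ forall h, 0 < h -> kappa h = h * K h.

Lemma h_multiple_zero d : h_multiple d (fun _ => 0).
Proof. exists (fun _ => 0); split; [apply poly_le_zero|intros; ring]. Qed.

Lemma h_multiple_plus d k1 k2 :
  h_multiple d k1 -> h_multiple d k2 -> h_multiple d (fun h => k1 h + k2 h).
Proof.
  intros [F [HF H1]] [G [HG H2]]; exists (fun w => F w + G w); split.
  - apply poly_le_plus; auto.
  - intros h Hh; rewrite H1, H2; auto; ring.
Qed.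

Lemma h_multiple_scal d c k : h_multiple d k -> h_multiple d (fun h => c * k h).
Proof.
  intros [F [HF H1]]; exists (fun w => c * F w); split.
  - apply poly_le_scal; auto.
  - intros h Hh; rewrite H1; auto; ring.
Qed.

Definition primitive_on_circle (h : R) (G : R -> R -> R -> R) (P : R -> R -> R)
  (kappa : R) : Prop :=
  forall t, is_derive (fun t => G h (X h t) (Y h t)) t (P (X h t) (Y h t) - kappa).

Inductive mono_reduction (k : nat) (P : R -> R -> R) : Prop :=
  MonoReduction (c : R) (G : R -> R -> R -> R) :
    (forall h, 0 < h -> primitive_on_circle h G P (c * h ^ (k / 2))) ->
    (Nat.odd k = true -> c = 0) ->
    odd_u (k - 1) (jump G) -> mono_reduction k P.

Lemma reduce_x0 : mono_reduction 0 (mono 0 0).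
Proof.
  apply (MonoReduction _ _ 1 (fun _ _ _ => 0)).
  - intros h _ t; eapply derive_congr; [apply is_derive_const|].
    unfold mono, zero; simpl; ring.
  - discriminate.
  - apply odd_u_ext with (fun _ => 0); [unfold jump; intros; ring|apply odd_u_zero].
Qed.

(* x = d/dt y. *)
Lemma reduce_x1 : mono_reduction 1 (mono 1 0).
Proof.
  apply (MonoReduction _ _ 0 (fun _ => mono 0 1)); auto.
  - intros h _ t; eapply derive_congr; [apply derive_mono|]; unfold mono; simpl; ring.
  - apply odd_u_ext with (fun _ => 0); [unfold jump, mono; intros; simpl; ring|].
    apply odd_u_zero.
Qed.

(* x^2 = d/dt (x y / 2) + h / 2. *)
Lemma reduce_x2 : mono_reduction 2 (mono 2 0).
Proof.
  apply (MonoReduction _ _ (/ 2) (fun _ x y => / 2 * mono 1 1 x y)).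
  - intros h Hh t; eapply derive_congr; [apply is_derive_scal, derive_mono|].
    pose proof (circle_XY h t (Rlt_le _ _ Hh)); unfold mono; simpl in *; nra.
  - discriminate.
  - eapply odd_u_ext; [|apply (odd_u_scal _ (/ 2)), (odd_u_jump_mono 1 1); lia].
    unfold jump; intros h _; simpl; ring.
Qed.

(* (i+2) x^(i+2) = d/dt (x^(i+1) y) + (i+1) h x^i, using y^2 = h - x^2. *)
Lemma reduce_x_step i :
  (1 <= i)%nat -> mono_reduction i (mono i 0) -> mono_reduction (S (S i)) (mono (S (S i)) 0).
Proof.
  intros Hi [c G HG Hodd HJ].
  assert (Hdiv : (S (S i) / 2 = S (i / 2))%nat).
  { replace (S (S i)) with (i + 1 * 2)%nat by lia; rewrite Nat.div_add; lia. }
  assert (Hpos := lt_0_INR (S (S i)) ltac:(lia)).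
  apply (MonoReduction _ _ (INR (S i) / INR (S (S i)) * c)
           (fun h x y => / INR (S (S i)) * (mono (S i) 1 x y + INR (S i) * h * G h x y))).
  - intros h Hh t; rewrite Hdiv.
    eapply derive_congr;
      [apply is_derive_scal, derive_plus; [apply derive_mono|apply is_derive_scal, HG, Hh]|].
    pose proof (circle_XY h t (Rlt_le _ _ Hh)).
    rewrite (S_INR (S i)) in *; unfold mono in *; cbn [pred pow] in *.
    change (INR 1) with 1.
    replace (Y h t * (Y h t * 1)) with (h - X h t ^ 2) by (simpl in *; lra).
    field; apply Rgt_not_eq, Hpos.
  - intro Ho; rewrite Hodd by exact Ho; ring.
  - replace (S (S i) - 1)%nat with (S (S (i - 1))) by lia.
    eapply odd_u_ext; [|apply (odd_u_scal _ (/ INR (S (S i)))), odd_u_plus;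
      [apply (odd_u_weaken (S i + 1 - 1)); [lia|apply (odd_u_jump_mono (S i) 1); lia]
      |apply (odd_u_scal _ (INR (S i))), odd_u_mul_h, HJ]].
    unfold jump; intros h _; simpl; ring.
Qed.

(* The step needs i >= 1 (its jump degree estimate fails from i = 0), hence
   three base cases. *)
Lemma reduce_x_power i : mono_reduction i (mono i 0).
Proof.
  induction i as [i IH] using lt_wf_ind.
  destruct i as [|[|[|i]]].
  - exact reduce_x0.
  - exact reduce_x1.
  - exact reduce_x2.
  - apply reduce_x_step; [lia|apply IH; lia].
Qed.

(* x^i y = d/dt (- x^(i+1) / (i+1)). *)
Lemma reduce_y1 i : mono_reduction (i + 1) (mono i 1).
Proof.
  assert (Hpos := lt_0_INR (S i) ltac:(lia)).
  apply (MonoReduction _ _ 0 (fun _ x y => - / INR (S i) * mono (S i) 0 x y)); auto.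
  - intros h Hh t; eapply derive_congr; [apply is_derive_scal, derive_mono|].
    unfold mono; cbn [pred]; change (INR 0) with 0; field; apply Rgt_not_eq, Hpos.
  - replace (i + 1 - 1)%nat with (S i + 0 - 1)%nat by lia.
    eapply odd_u_ext; [|apply (odd_u_scal _ (- / INR (S i))), (odd_u_jump_mono (S i) 0); lia].
    unfold jump; intros h _; ring.
Qed.

(* (i+1) x^i y^(j+2) = (j+1) x^(i+2) y^j - d/dt (x^(i+1) y^(j+1)). *)
Lemma reduce_y_step i j :
  mono_reduction (S (S i) + j) (mono (S (S i)) j) ->
  mono_reduction (i + S (S j)) (mono i (S (S j))).
Proof.
  replace (S (S i) + j)%nat with (i + S (S j))%nat by lia.
  intros [c G HG Hodd HJ].
  assert (Hpos := lt_0_INR (S i) ltac:(lia)).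
  apply (MonoReduction _ _ (INR (S j) / INR (S i) * c)
           (fun h x y => / INR (S i) * (INR (S j) * G h x y - mono (S i) (S j) x y))).
  - intros h Hh t; eapply derive_congr;
      [apply is_derive_scal, derive_minus; [apply is_derive_scal, HG, Hh|apply derive_mono]|].
    unfold mono; cbn [pred]; field; apply Rgt_not_eq, Hpos.
  - intro Ho; rewrite Hodd by exact Ho; ring.
  - eapply odd_u_ext; [|apply (odd_u_scal _ (/ INR (S i))), odd_u_plus;
      [apply (odd_u_scal _ (INR (S j))), HJ
      |apply (odd_u_scal _ (-1));
       replace (i + S (S j) - 1)%nat with (S i + S j - 1)%nat by lia;
       apply (odd_u_jump_mono (S i) (S j)); lia]].
    unfold jump; intros h _; ring.
Qed.

Lemma reduce_monomial i j : mono_reduction (i + j) (mono i j).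
Proof.
  revert i; induction j as [j IH] using lt_wf_ind; intro i.
  destruct j as [|[|j]].
  - rewrite Nat.add_0_r; apply reduce_x_power.
  - apply reduce_y1.
  - apply reduce_y_step, IH; lia.
Qed.

Inductive decomposable (n : nat) (P : R -> R -> R) : Prop :=
  Decomposable (kappa : R -> R) (G : R -> R -> R -> R) :
    (forall h, 0 < h -> primitive_on_circle h G P (kappa h)) ->
    (forall h t, ex_derive (fun t => P (X h t) (Y h t)) t) ->
    h_multiple ((n - 1) / 2) kappa ->
    odd_u n (jump G) -> decomposable n P.

Lemma decomposable_ext n P Q :
  (forall x y, P x y = Q x y) -> decomposable n P -> decomposable n Q.
Proof.
  intros He [k G HG HE HK HJ]; apply (Decomposable _ _ k G); auto.
  - intros h Hh t; rewrite <- He; apply HG, Hh.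
  - intros h t; eapply ex_derive_ext; [|apply (HE h t)]; intro; simpl; auto.
Qed.

Lemma decomposable_zero n : decomposable n (fun _ _ => 0).
Proof.
  apply (Decomposable _ _ (fun _ => 0) (fun _ _ _ => 0)).
  - intros h _ t; eapply derive_congr; [apply is_derive_const|]; unfold zero; simpl; ring.
  - intros; apply ex_derive_const.
  - apply h_multiple_zero.
  - eapply odd_u_ext; [|apply odd_u_zero]; unfold jump; intros; ring.
Qed.

Lemma decomposable_plus n P Q :
  decomposable n P -> decomposable n Q -> decomposable n (fun x y => P x y + Q x y).
Proof.
  intros [k G HG HE HK HJ] [k' G' HG' HE' HK' HJ'].
  apply (Decomposable _ _ (fun h => k h + k' h) (fun h x y => G h x y + G' h x y)).
  - intros h Hh t; eapply derive_congr; [apply derive_plus; [apply HG|apply HG']; auto|].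
    ring.
  - intros h t; apply (ex_derive_plus (fun t => P _ _) (fun t => Q _ _)); auto.
  - apply h_multiple_plus; auto.
  - eapply odd_u_ext; [|apply odd_u_plus; [exact HJ|exact HJ']]; unfold jump; intros; ring.
Qed.

Lemma decomposable_scal n c P : decomposable n P -> decomposable n (fun x y => c * P x y).
Proof.
  intros [k G HG HE HK HJ].
  apply (Decomposable _ _ (fun h => c * k h) (fun h x y => c * G h x y)).
  - intros h Hh t; eapply derive_congr; [apply is_derive_scal, HG, Hh|]; ring.
  - intros h t; apply ex_derive_scal; auto.
  - apply h_multiple_scal; auto.
  - eapply odd_u_ext; [|apply (odd_u_scal _ c), HJ]; unfold jump; intros; ring.
Qed.

Lemma decomposable_sum n F N :
  (forall i, (i <= N)%nat -> decomposable n (F i)) ->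
  decomposable n (fun x y => sum_f_R0 (fun i => F i x y) N).
Proof.
  induction N; intro H; simpl; [apply H; lia|].
  apply decomposable_plus; [apply IHN; intros i Hi|]; apply H; lia.
Qed.

(* The constant c h^(k/2) of a monomial of degree k <= n+1 is h K(h) with
   deg K <= [(n-1)/2]: it vanishes unless k is even, and then k/2 >= 1. *)
Lemma decomposable_mono n i j : (1 <= i + j <= S n)%nat -> decomposable n (mono i j).
Proof.
  intro Hk; destruct (reduce_monomial i j) as [c G HG Hodd HJ].
  apply (Decomposable _ _ (fun h => c * h ^ ((i + j) / 2)) G); auto.
  - intros h t; eexists; apply derive_mono.
  - destruct (Nat.Even_or_Odd (i + j)) as [[m Hm]|[m Hm]].
    + rewrite Hm, Nat.mul_comm, Nat.div_mul by lia.
      exists (fun w => c * w ^ (m - 1)); split.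
      * apply poly_le_monomial, Nat.div_le_lower_bound; lia.
      * intros h _; replace m with (S (m - 1)) at 1 by lia; simpl; ring.
    + rewrite Hodd by (rewrite Hm, Nat.odd_odd; auto).
      exists (fun _ => 0); split; [apply poly_le_zero|intros; ring].
  - eapply odd_u_weaken; [|exact HJ]; lia.
Qed.

(* Multiplying a polynomial of degree <= n by x or y gives a decomposable
   integrand: all its monomials have degree between 1 and n + 1. *)
Lemma decomposable_peval2_mono n c p q :
  deg2_le n c -> (p + q = 1)%nat ->
  decomposable n (fun x y => peval2 n c x y * mono p q x y).
Proof.
  intros Hc Hpq.
  apply decomposable_ext with
    (fun x y => sum_f_R0 (fun i => sum_f_R0 (fun j =>
                  c i j * mono (i + p) (j + q) x y) n) n).
  { intros x y; symmetry; unfold peval2; rewrite Rmult_comm, scal_sum; apply sum_eq; intros i _.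
    rewrite Rmult_comm, scal_sum; apply sum_eq; intros j _.
    unfold mono; rewrite !pow_add; ring. }
  apply decomposable_sum; intros i _; apply decomposable_sum; intros j _.
  destruct (le_lt_dec (i + j) n).
  - apply decomposable_scal, decomposable_mono; lia.
  - rewrite (Hc i j) by lia.
    eapply decomposable_ext; [|apply decomposable_zero]; intros; simpl; ring.
Qed.

Definition integrand (g f : R -> R -> R) (x y : R) : R := - (g x y * y) - f x y * x.

Lemma arcint_integrand g f h t0 t1 :
  arcint g f h t0 t1 = - Rint (fun t => integrand g f (X h t) (Y h t)) t1 t0.
Proof.
  unfold arcint, integrand, X, Y; do 2 f_equal.
  apply functional_extensionality; intro t; ring.
Qed.

Lemma decomposable_integrand n g f :
  deg2_le n g -> deg2_le n f -> decomposable n (integrand (peval2 n g) (peval2 n f)).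
Proof.
  intros Hg Hf.
  apply decomposable_ext with (fun x y => -1 * (peval2 n g x y * mono 0 1 x y)
                                          + -1 * (peval2 n f x y * mono 1 0 x y)).
  { intros x y; unfold integrand, mono; simpl; ring. }
  apply decomposable_plus; apply decomposable_scal, decomposable_peval2_mono; auto.
Qed.

Lemma Rint_primitive (F G : R -> R) a b :
  (forall t, is_derive G t (F t)) -> (forall t, continuous F t) -> Rint F a b = G b - G a.
Proof.
  intros HD HC.
  assert (HI : is_RInt F a b (minus (G b) (G a))).
  { apply (is_RInt_derive (V := R_CompleteNormedModule) G F); intros; auto. }
  assert (Hex : ex_RInt F a b) by (eexists; exact HI).
  unfold Rint.
  assert (HP : exists I, exists pr : Riemann_integrable F a b, RiemannInt pr = I).
  { exists (RiemannInt (ex_RInt_Reals_0 _ _ _ Hex)); eexists; reflexivity. }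
  destruct (epsilon_spec (inhabits 0) _ HP) as [pr Hpr].
  rewrite <- Hpr, <- RInt_Reals, (is_RInt_unique F a b _ HI); reflexivity.
Qed.

Lemma Rint_circle h G P kappa t0 t1 :
  primitive_on_circle h G P kappa ->
  (forall t, ex_derive (fun t => P (X h t) (Y h t)) t) ->
  Rint (fun t => P (X h t) (Y h t)) t1 t0 =
    G h (X h t0) (Y h t0) - G h (X h t1) (Y h t1) + kappa * (t0 - t1).
Proof.
  intros HG HE.
  rewrite (Rint_primitive _ (fun t => G h (X h t) (Y h t) + kappa * t)); [ring| |].
  - intro t; eapply derive_congr;
      [apply derive_plus; [apply HG|apply is_derive_scal, is_derive_id]|].
    unfold one; simpl; ring.
  - intro t; apply (ex_derive_continuous (K := R_AbsRing) (V := R_NormedModule)); auto.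
Qed.

(* The arc AD has angular length PI + 2 atan u. *)
Lemma int_AD_primitive g f G kappa h :
  0 < h -> primitive_on_circle h G (integrand g f) kappa ->
  (forall t, ex_derive (fun t => integrand g f (X h t) (Y h t)) t) ->
  int_AD g f h = - jump G h - kappa * (PI + 2 * atan (uu h)).
Proof.
  intros Hh HG HE; unfold int_AD; rewrite arcint_integrand, (Rint_circle h G _ kappa) by auto.
  rewrite X_mPI_sub, Y_mPI_sub, X_A, Y_A by exact Hh; unfold jump; ring.
Qed.

(* The arc DA has angular length PI - 2 atan u. *)
Lemma int_DA_primitive g f G kappa h :
  0 < h -> primitive_on_circle h G (integrand g f) kappa ->
  (forall t, ex_derive (fun t => integrand g f (X h t) (Y h t)) t) ->
  int_DA g f h = jump G h - kappa * (PI - 2 * atan (uu h)).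
Proof.
  intros Hh HG HE; unfold int_DA; rewrite arcint_integrand, (Rint_circle h G _ kappa) by auto.
  rewrite X_PI_sub, Y_PI_sub, X_A, Y_A by exact Hh; unfold jump; ring.
Qed.

(* The basic integrals: -y = d/dt x and -y^2 = d/dt (x y / 2) - h / 2. *)
Lemma U00_eq h : 0 < h -> U 0 0 h = -2 * uu h.
Proof.
  intro Hh; unfold U.
  rewrite (int_AD_primitive _ _ (fun _ x _ => x) 0); [unfold jump; ring|exact Hh| |].
  - intro t; unfold integrand, X, Y; auto_derive; auto; ring.
  - intro t; unfold integrand, X, Y; auto_derive; auto.
Qed.

Lemma U01_eq h : 0 < h -> U 0 1 h = - uu h ^ 3 + h / 2 * (PI + 2 * atan (uu h)).
Proof.
  intro Hh; unfold U.
  rewrite (int_AD_primitive _ _ (fun _ x y => x * y / 2) (- h / 2));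
    [unfold jump; field|exact Hh| |].
  - intro t; unfold integrand; pose proof (circle_XY h t (Rlt_le _ _ Hh)).
    unfold X, Y in *; auto_derive; auto; simpl in *; nra.
  - intro t; unfold integrand, X, Y; auto_derive; auto.
Qed.

Lemma V01_eq h : 0 < h -> V 0 1 h = uu h ^ 3 + h / 2 * (PI - 2 * atan (uu h)).
Proof.
  intro Hh; unfold V.
  rewrite (int_DA_primitive _ _ (fun _ x y => x * y / 2) (- h / 2));
    [unfold jump; field|exact Hh| |].
  - intro t; unfold integrand; pose proof (circle_XY h t (Rlt_le _ _ Hh)).
    unfold X, Y in *; auto_derive; auto; simpl in *; nra.
  - intro t; unfold integrand, X, Y; auto_derive; auto.
Qed.

(* On AD: an odd function of u minus 2 K(h) U_{0,1}, where kappa = h K(h);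
   the leftover 2 K(h) u^3 of U_{0,1} is absorbed into the odd part. *)
Lemma int_AD_structure n g f :
  (1 <= n)%nat -> deg2_le n g -> deg2_le n f ->
  exists E K, odd_u n E /\ poly_le ((n - 1) / 2) K /\
    forall h, 0 < h -> int_AD (peval2 n g) (peval2 n f) h = E h - 2 * K h * U 0 1 h.
Proof.
  intros Hn Hg Hf.
  destruct (decomposable_integrand n g f Hg Hf) as [kappa G HG HE [K [HK Hk]] HJ].
  assert (Hdeg : (S (2 * ((n - 1) / 2)) <= n)%nat)
    by (pose proof (Nat.Div0.mul_div_le (n - 1) 2); lia).
  exists (fun h => -1 * jump G h + -2 * (K h * uu h ^ 3)), K; split; [|split; [exact HK|]].
  - apply odd_u_plus; apply odd_u_scal; [exact HJ|exact (odd_u_poly_u3 _ _ _ HK Hdeg)].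
  - intros h Hh.
    rewrite (int_AD_primitive _ _ G (kappa h)), U01_eq, Hk by auto; field.
Qed.

Lemma int_DA_structure n g f :
  (1 <= n)%nat -> deg2_le n g -> deg2_le n f ->
  exists E K, odd_u n E /\ poly_le ((n - 1) / 2) K /\
    forall h, 0 < h -> int_DA (peval2 n g) (peval2 n f) h = E h - 2 * K h * V 0 1 h.
Proof.
  intros Hn Hg Hf.
  destruct (decomposable_integrand n g f Hg Hf) as [kappa G HG HE [K [HK Hk]] HJ].
  assert (Hdeg : (S (2 * ((n - 1) / 2)) <= n)%nat)
    by (pose proof (Nat.Div0.mul_div_le (n - 1) 2); lia).
  exists (fun h => jump G h + 2 * (K h * uu h ^ 3)), K; split; [|split; [exact HK|]].
  - apply odd_u_plus; [exact HJ|apply odd_u_scal, (odd_u_poly_u3 _ _ _ HK Hdeg)].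
  - intros h Hh.
    rewrite (int_DA_primitive _ _ G (kappa h)), V01_eq, Hk by auto; field.
Qed.

Lemma Rpower_3_2 x : 0 < x -> Rpower x (3 / 2) = x * sqrt x.
Proof.
  intro Hx; replace (3 / 2) with (1 + / 2) by field.
  rewrite Rpower_plus, Rpower_1, Rpower_sqrt; auto.
Qed.

(* u Q(u^2) = u Q(0) + w^(3/2) phi(w), and u = - U_{0,0} / 2. *)
Lemma odd_u_split d E :
  odd_u (S d) E -> exists c phi, forall h, 0 < h ->
    E h = c * U 0 0 h + Rpower (w_of h) (3 / 2) * peval d phi (w_of h).
Proof.
  intros [F [[q Hq] HE]].
  exists (- q O / 2), (fun k => q (S k)); intros h Hh.
  rewrite HE, Hq, peval_split, U00_eq, Rpower_3_2 by (auto; apply w_of_pos, Hh).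
  change (sqrt (w_of h)) with (uu h); rewrite (uu_sq h Hh); field.
Qed.

Theorem lemma4p1 (n : nat) (f1 g1 f2 g2 : nat -> nat -> R) :
  (1 <= n)%nat ->
  deg2_le n f1 -> deg2_le n g1 -> deg2_le n f2 -> deg2_le n g2 ->
  exists (al be ga de phi : nat -> R),
    forall h : R, 0 < h ->
      let w := (sqrt (1 + 4 * h) - 1) / 2 in
      melnikov n f1 g1 f2 g2 h =
        peval (n / 2) al h * U 0 0 h + peval ((n - 1) / 2) be h * U 0 1 h
        + peval (n / 2) ga h * V 0 0 h + peval ((n - 1) / 2) de h * V 0 1 h
        + Rpower w (3 / 2) * peval (n - 1) phi w.
Proof.
  intros Hn Hf1 Hg1 Hf2 Hg2.
  destruct (int_AD_structure n g1 f1 Hn Hg1 Hf1) as [E1 [K1 [HE1 [[b1 Hb1] Hint1]]]].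
  destruct (int_DA_structure n g2 f2 Hn Hg2 Hf2) as [E2 [K2 [HE2 [[b2 Hb2] Hint2]]]].
  destruct (odd_u_split (n - 1) (fun h => E1 h + E2 h)) as [c [phi Hsplit]].
  { replace (S (n - 1)) with n by lia; apply odd_u_plus; assumption. }
  exists (fun k => match k with O => c | _ => 0 end), (fun k => -2 * b1 k),
    (fun _ => 0), (fun k => -2 * b2 k), phi.
  intros h Hh w; change w with (w_of h).
  rewrite peval_const by (intros [|k] Hk; [lia|reflexivity]).
  rewrite !peval_scal, peval_zero, <- Hb1, <- Hb2.
  unfold melnikov; rewrite Hint1, Hint2 by exact Hh.
  specialize (Hsplit h Hh); cbv beta in Hsplit; lra.
Qed.
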